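(* Let $a,b>0$, $I=[g(b),b]$, $J=[f(a),a]$, and let $g$ and $f$ be decreasing homeomorphisms of $I$ and $J$ onto their images $g(I)\subseteq I$ and $f(J)\subseteq J$ such that (1) $0$ is a repelling fixed point of $g$ and $\{x_L,x_R\}$ with $x_L<0<x_R$ is an attracting period-two orbit of $g$, $g(x_L)=x_R$, $g(x_R)=x_L$; moreover $b>x_R$; (2) $0$ is a repelling fixed point of $f$ and $\{\overline{x}_L,\overline{x}_R\}$ with $\overline{x}_L<0<\overline{x}_R$ is an attracting period-two orbit of $f$, $f(\overline{x}_L)=\overline{x}_R$, $f(\overline{x}_R)=\overline{x}_L$; moreover $a>\overline{x}_R$; (3) $g^2(x)<x$ for all $x\in(x_R,b]$; (4) $f^2(x)<x$ for all $x\in(\overline{x}_R,a]$. Then there exists a (not necessarily unique) homeomorphism $h:[f(a),\overline{x}_L]\cup[\overline{x}_R,a]\to[g(b),x_L]\cup[x_R,b]$ such that $g(h(x))=h(f(x))$ for all $x\in[f(a),\overline{x}_L]\cup[\overline{x}_R,a]$.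
   Context: A fixed point $p$ of a homeomorphism $\phi$ is attracting if there is a neighbourhood $U$ of $p$ with $\phi^n(x)\to p$ for all $x\in U$, and repelling if it is attracting for $\phi^{-1}$. A period-two orbit $\{p,q\}$ of $\phi$ is attracting if $p$ and $q$ are attracting fixed points of $\phi^2=\phi\circ\phi$. *)

From Stdlib Require Import Reals Lra.
Open Scope R_scope.

Definition cc (u v : R) : R -> Prop := fun x => u <= x <= v.

Definition unionS (A B : R -> Prop) : R -> Prop := fun x => A x \/ B x.

Definition imageS (phi : R -> R) (D : R -> Prop) : R -> Prop :=
  fun y => exists x, D x /\ phi x = y.

Definition cont_on (D : R -> Prop) (phi : R -> R) : Prop :=
  forall x, D x -> forall eps, 0 < eps ->
    exists delta, 0 < delta /\
      forall y, D y -> Rabs (y - x) < delta -> Rabs (phi y - phi x) < eps.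

Definition homeo_onto (D E : R -> Prop) (phi : R -> R) : Prop :=
  (forall x, D x -> E (phi x)) /\
  (forall y, E y -> exists x, D x /\ phi x = y) /\
  (forall x y, D x -> D y -> phi x = phi y -> x = y) /\
  cont_on D phi /\
  (exists psi : R -> R,
     (forall y, E y -> D (psi y) /\ phi (psi y) = y) /\ cont_on E psi).

Definition decreasing_on (D : R -> Prop) (phi : R -> R) : Prop :=
  forall x y, D x -> D y -> x < y -> phi y < phi x.

Definition decr_homeo_self (D : R -> Prop) (phi : R -> R) : Prop :=
  decreasing_on D phi /\ homeo_onto D (imageS phi D) phi /\
  (forall x, D x -> D (phi x)).

Definition attracting_fp (D : R -> Prop) (phi : R -> R) (p : R) : Prop :=
  D p /\ phi p = p /\
  exists delta, 0 < delta /\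
    forall x, D x -> Rabs (x - p) < delta ->
      Un_cv (fun n => Nat.iter n phi x) p.

(* p is a repelling fixed point of phi on D, i.e. attracting for phi^{-1}:
   phi p = p and there is a neighbourhood U of p on which all iterates of
   phi^{-1} are defined (backward orbit y with y 0 = x, phi (y (n+1)) = y n,
   staying in D) and converge to p. *)
Definition repelling_fp (D : R -> Prop) (phi : R -> R) (p : R) : Prop :=
  D p /\ phi p = p /\
  exists delta, 0 < delta /\
    forall x, Rabs (x - p) < delta ->
      exists y : nat -> R, y O = x /\
        (forall n, D (y (S n)) /\ phi (y (S n)) = y n) /\
        Un_cv y p.

Definition attracting_2orbit (D : R -> Prop) (phi : R -> R) (p q : R) : Prop :=
  p <> q /\ phi p = q /\ phi q = p /\
  attracting_fp D (fun x => phi (phi x)) p /\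
  attracting_fp D (fun x => phi (phi x)) q.

From Stdlib Require Import Reals Lra Lia ClassicalEpsilon.
Open Scope R_scope.

(* Both maps exchange the two sides of their interval, so g^2 on [xR, b] and f^2 on
   [xbR, a] are increasing maps that push every point down towards the fixed left
   endpoint.  Any two such maps are topologically conjugate, since each is conjugate to
   t |-> t/2 on [0, 1] via a fundamental domain.  A conjugacy k from f^2 to g^2 on the
   right pieces extends to the left pieces as g o k o f^-1, and the glued map conjugates
   f to g. *)

Definition increasing_on (D : R -> Prop) (T : R -> R) : Prop :=
  forall x y, D x -> D y -> x < y -> T x < T y.

Record increasing_bijection (u v c d : R) (T : R -> R) : Prop := {
  ib_incr : increasing_on (cc u v) T;
  ib_maps : forall x, cc u v x -> cc c d (T x);
  ib_onto : forall y, cc c d y -> exists x, cc u v x /\ T x = y }.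

Record decreasing_bijection (u v c d : R) (T : R -> R) : Prop := {
  db_decr : decreasing_on (cc u v) T;
  db_maps : forall x, cc u v x -> cc c d (T x);
  db_onto : forall y, cc c d y -> exists x, cc u v x /\ T x = y }.

Definition inv_on (D : R -> Prop) (T : R -> R) (y : R) : R :=
  epsilon (inhabits 0) (fun x => D x /\ T x = y).

Lemma inv_on_spec D T y : (exists x, D x /\ T x = y) ->
  D (inv_on D T y) /\ T (inv_on D T y) = y.
Proof. intros Hy. exact (epsilon_spec (inhabits 0) _ Hy). Qed.

Lemma increasing_on_le D T x y :
  increasing_on D T -> D x -> D y -> x <= y -> T x <= T y.
Proof.
  intros HT Hx Hy Hxy. destruct (Rle_lt_or_eq_dec _ _ Hxy) as [Hlt | ->].
  - left; auto.
  - right; reflexivity.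
Qed.

Lemma increasing_on_lt_inv D T x y :
  increasing_on D T -> D x -> D y -> T x < T y -> x < y.
Proof.
  intros HT Hx Hy HTxy. destruct (Rlt_le_dec x y) as [Hlt | Hle]; auto.
  pose proof (increasing_on_le D T y x HT Hy Hx Hle). lra.
Qed.

Lemma increasing_on_inj D T x y :
  increasing_on D T -> D x -> D y -> T x = T y -> x = y.
Proof.
  intros HT Hx Hy HTxy. destruct (Rtotal_order x y) as [Hlt | [Heq | Hgt]]; auto.
  - pose proof (HT _ _ Hx Hy Hlt); lra.
  - pose proof (HT _ _ Hy Hx Hgt); lra.
Qed.

Lemma decreasing_on_le D T x y :
  decreasing_on D T -> D x -> D y -> x <= y -> T y <= T x.
Proof.
  intros HT Hx Hy Hxy. destruct (Rle_lt_or_eq_dec _ _ Hxy) as [Hlt | ->].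
  - left; auto.
  - right; reflexivity.
Qed.

Lemma decreasing_on_inj D T x y :
  decreasing_on D T -> D x -> D y -> T x = T y -> x = y.
Proof.
  intros HT Hx Hy HTxy. destruct (Rtotal_order x y) as [Hlt | [Heq | Hgt]]; auto.
  - pose proof (HT _ _ Hx Hy Hlt); lra.
  - pose proof (HT _ _ Hy Hx Hgt); lra.
Qed.

Lemma increasing_bijection_inv u v c d T V :
  increasing_bijection u v c d T ->
  (forall y, cc c d y -> cc u v (V y) /\ T (V y) = y) ->
  increasing_bijection c d u v V.
Proof.
  intros [HTi HTm HTs] HV. split.
  - intros y1 y2 H1 H2 H12. destruct (HV y1 H1) as [Hv1 E1], (HV y2 H2) as [Hv2 E2].
    apply (increasing_on_lt_inv _ _ _ _ HTi); auto. congruence.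
  - intros y Hy. apply HV; auto.
  - intros x Hx. exists (T x). split; auto.
    destruct (HV (T x) (HTm x Hx)) as [Hv E].
    apply (increasing_on_inj _ _ _ _ HTi); auto.
Qed.

Lemma increasing_bijection_comp u v c d e w S T :
  increasing_bijection u v c d S -> increasing_bijection c d e w T ->
  increasing_bijection u v e w (fun x => T (S x)).
Proof.
  intros [HSi HSm HSs] [HTi HTm HTs]. split.
  - intros x y Hx Hy Hxy. apply HTi; auto.
  - intros x Hx. apply HTm, HSm, Hx.
  - intros y Hy. destruct (HTs y Hy) as [z [Hz <-]]. destruct (HSs z Hz) as [x [Hx <-]].
    exists x; auto.
Qed.

Lemma cont_on_subset D D' T :
  cont_on D T -> (forall x, D' x -> D x) -> cont_on D' T.
Proof.
  intros HT Hsub x Hx eps Heps. destruct (HT x (Hsub x Hx) eps Heps) as [del [Hdel Hy]].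
  exists del; split; auto.
Qed.

Lemma cont_on_comp D E S T :
  cont_on D S -> cont_on E T -> (forall x, D x -> E (S x)) ->
  cont_on D (fun x => T (S x)).
Proof.
  intros HS HT Hmaps x Hx eps Heps.
  destruct (HT (S x) (Hmaps x Hx) eps Heps) as [del [Hdel HTy]].
  destruct (HS x Hx del Hdel) as [del' [Hdel' HSy]].
  exists del'; split; auto.
Qed.

(* The two intervals are at positive distance, so continuity is local to each. *)
Lemma cont_on_union u1 v1 u2 v2 T : v1 < u2 ->
  cont_on (cc u1 v1) T -> cont_on (cc u2 v2) T ->
  cont_on (unionS (cc u1 v1) (cc u2 v2)) T.
Proof.
  intros Hgap H1 H2 x Hx eps Heps.
  assert (Hpiece : forall u v, cc u v x -> cont_on (cc u v) T ->
            (forall y, unionS (cc u1 v1) (cc u2 v2) y -> Rabs (y - x) < u2 - v1 -> cc u v y) ->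
            exists del, 0 < del /\ forall y, unionS (cc u1 v1) (cc u2 v2) y ->
              Rabs (y - x) < del -> Rabs (T y - T x) < eps).
  { intros u v Hxuv Huv Hsame. destruct (Huv x Hxuv eps Heps) as [del [Hdel Hy]].
    exists (Rmin del (u2 - v1)). split; [apply Rmin_pos; lra |].
    intros y Hyu Hyx. pose proof (Rmin_l del (u2 - v1)). pose proof (Rmin_r del (u2 - v1)).
    apply Hy; [apply Hsame |]; auto; lra. }
  destruct Hx as [Hx | Hx]; [apply (Hpiece u1 v1) | apply (Hpiece u2 v2)]; auto;
    intros y [Hy | Hy] Hyx; auto; exfalso; unfold cc in *;
    revert Hyx; unfold Rabs; destruct Rcase_abs; lra.
Qed.

Lemma increasing_bijection_cont u v c d T :
  increasing_bijection u v c d T -> cont_on (cc u v) T.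
Proof.
  intros [HTi HTm HTs] x Hx eps Heps. pose proof (HTm x Hx) as HTx.
  assert (Hlow : exists del, 0 < del /\
            forall y, cc u v y -> x - del < y -> T x - eps < T y).
  { destruct (HTs (Rmax c (T x - eps / 2))) as [x1 [Hx1 E1]].
    { unfold cc, Rmax in *; destruct Rle_dec; lra. }
    destruct (Rlt_le_dec x1 x) as [Hlt | Hle].
    - exists (x - x1); split; [lra |]. intros y Hy Hxy.
      pose proof (HTi _ _ Hx1 Hy ltac:(lra)). pose proof (Rmax_r c (T x - eps / 2)). lra.
    - exists 1; split; [lra |]. intros y Hy _.
      pose proof (increasing_on_le _ _ _ _ HTi Hx Hx1 Hle). pose proof (HTm y Hy).
      unfold cc, Rmax in *; destruct Rle_dec; lra. }
  assert (Hhigh : exists del, 0 < del /\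
            forall y, cc u v y -> y < x + del -> T y < T x + eps).
  { destruct (HTs (Rmin d (T x + eps / 2))) as [x2 [Hx2 E2]].
    { unfold cc, Rmin in *; destruct Rle_dec; lra. }
    destruct (Rlt_le_dec x x2) as [Hlt | Hle].
    - exists (x2 - x); split; [lra |]. intros y Hy Hxy.
      pose proof (HTi _ _ Hy Hx2 ltac:(lra)). pose proof (Rmin_r d (T x + eps / 2)). lra.
    - exists 1; split; [lra |]. intros y Hy _.
      pose proof (increasing_on_le _ _ _ _ HTi Hx2 Hx Hle). pose proof (HTm y Hy).
      unfold cc, Rmin in *; destruct Rle_dec; lra. }
  destruct Hlow as [del1 [Hdel1 Hlow]], Hhigh as [del2 [Hdel2 Hhigh]].
  exists (Rmin del1 del2); split; [apply Rmin_pos; lra |].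
  intros y Hy Hyx. pose proof (Rmin_l del1 del2). pose proof (Rmin_r del1 del2).
  assert (x - del1 < y < x + del2) by (revert Hyx; unfold Rabs; destruct Rcase_abs; lra).
  pose proof (Hlow y Hy ltac:(lra)). pose proof (Hhigh y Hy ltac:(lra)).
  unfold Rabs; destruct Rcase_abs; lra.
Qed.

(* Extend [T] continuously to all of [R] by clamping, then use the global IVT. *)
Lemma cont_on_ivt u v T y : u <= v -> cont_on (cc u v) T ->
  (T u - y) * (T v - y) <= 0 -> exists x, cc u v x /\ T x = y.
Proof.
  intros Huv HT Hsign.
  set (clamp z := Rmax u (Rmin v z)).
  assert (Hin : forall z, cc u v (clamp z)).
  { intros z; unfold cc, clamp, Rmax, Rmin; repeat destruct Rle_dec; lra. }
  assert (Hid : forall z, cc u v z -> clamp z = z).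
  { intros z Hz; unfold cc, clamp, Rmax, Rmin in *; repeat destruct Rle_dec; lra. }
  assert (Hlip : forall z w, Rabs (clamp z - clamp w) <= Rabs (z - w)).
  { intros z w; unfold clamp, Rmax, Rmin; repeat destruct Rle_dec; unfold Rabs;
      repeat destruct Rcase_abs; lra. }
  assert (Hcont : continuity (fun z => T (clamp z) - y)).
  { intros x eps Heps. destruct (HT _ (Hin x) eps Heps) as [del [Hdel Hz]].
    exists del; split; auto. intros z [_ Hzx]. simpl in *. unfold R_dist in *.
    replace (T (clamp z) - y - (T (clamp x) - y)) with (T (clamp z) - T (clamp x)) by ring.
    apply Hz; auto. eapply Rle_lt_trans; [apply Hlip | exact Hzx]. }
  destruct (IVT_cor _ u v Hcont Huv) as [x [Hx Ex]].
  { rewrite !Hid; unfold cc; auto; lra. }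
  exists x; split; auto. rewrite Hid in Ex; auto. lra.
Qed.

Lemma homeo_onto_union u1 v1 u2 v2 c1 d1 c2 d2 h : v1 < u2 -> d1 < c2 ->
  increasing_bijection u1 v1 c1 d1 h -> increasing_bijection u2 v2 c2 d2 h ->
  homeo_onto (unionS (cc u1 v1) (cc u2 v2)) (unionS (cc c1 d1) (cc c2 d2)) h.
Proof.
  intros Hgap Hgap' H1 H2. pose proof H1 as [Hi1 Hm1 Hs1]. pose proof H2 as [Hi2 Hm2 Hs2].
  set (D := unionS (cc u1 v1) (cc u2 v2)). set (E := unionS (cc c1 d1) (cc c2 d2)).
  assert (Honto : forall y, E y -> exists x, D x /\ h x = y).
  { intros y [Hy | Hy].
    - destruct (Hs1 y Hy) as [x [Hx <-]]. exists x; split; [left |]; auto.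
    - destruct (Hs2 y Hy) as [x [Hx <-]]. exists x; split; [right |]; auto. }
  set (psi := inv_on D h).
  assert (Hpsi : forall y, E y -> D (psi y) /\ h (psi y) = y)
    by (intros y Hy; apply inv_on_spec, Honto, Hy).
  assert (Hpsi1 : forall y, cc c1 d1 y -> cc u1 v1 (psi y) /\ h (psi y) = y).
  { intros y Hy. destruct (Hpsi y (or_introl Hy)) as [[Hx | Hx] E1]; auto.
    pose proof (Hm2 _ Hx). unfold cc in *; lra. }
  assert (Hpsi2 : forall y, cc c2 d2 y -> cc u2 v2 (psi y) /\ h (psi y) = y).
  { intros y Hy. destruct (Hpsi y (or_intror Hy)) as [[Hx | Hx] E1]; auto.
    pose proof (Hm1 _ Hx). unfold cc in *; lra. }
  split; [| split; [exact Honto | split; [| split]]].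
  - intros x [Hx | Hx]; [left | right]; auto.
  - intros x y [Hx | Hx] [Hy | Hy] Exy.
    + apply (increasing_on_inj _ _ _ _ Hi1); auto.
    + pose proof (Hm1 x Hx); pose proof (Hm2 y Hy); unfold cc in *; lra.
    + pose proof (Hm2 x Hx); pose proof (Hm1 y Hy); unfold cc in *; lra.
    + apply (increasing_on_inj _ _ _ _ Hi2); auto.
  - apply cont_on_union; auto; eapply increasing_bijection_cont; eauto.
  - exists psi; split; auto. apply cont_on_union; auto; eapply increasing_bijection_cont.
    + exact (increasing_bijection_inv _ _ _ _ _ _ H1 Hpsi1).
    + exact (increasing_bijection_inv _ _ _ _ _ _ H2 Hpsi2).
Qed.

Definition dyadic_level (t : R) : nat :=
  epsilon (inhabits 0%nat) (fun n : nat => 1/2 < 2 ^ n * t <= 1).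

Lemma dyadic_level_exists t : 0 < t <= 1 -> exists n : nat, 1/2 < 2 ^ n * t <= 1.
Proof.
  intros Ht.
  assert (Hbig : exists k, 1/2 < 2 ^ k * t).
  { destruct (Pow_x_infinity 2 ltac:(rewrite Rabs_right; lra) (1 / t)) as [k Hk].
    exists k. specialize (Hk k (le_n k)).
    rewrite Rabs_right in Hk by (left; apply pow_lt; lra).
    apply Rge_le, (Rmult_le_compat_r t) in Hk; [| lra].
    replace (1 / t * t) with 1 in Hk by (field; lra). lra. }
  destruct Hbig as [k Hk]. induction k as [| k IH].
  - exists 0%nat. simpl in *. lra.
  - destruct (Rlt_le_dec (1/2) (2 ^ k * t)) as [Hlt | Hle]; auto.
    exists (S k). simpl in *. lra.
Qed.

Lemma dyadic_level_spec t : 0 < t <= 1 -> 1/2 < 2 ^ dyadic_level t * t <= 1.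
Proof. intros Ht. exact (epsilon_spec _ _ (dyadic_level_exists t Ht)). Qed.

Lemma dyadic_level_unique t n : 1/2 < 2 ^ n * t <= 1 -> dyadic_level t = n.
Proof.
  intros Hn.
  assert (Ht : 0 < t <= 1).
  { pose proof (pow_lt 2 n ltac:(lra)).
    assert (1 <= 2 ^ n) by (rewrite <- (pow1 n); apply pow_incr; lra).
    split; nra. }
  pose proof (dyadic_level_spec t Ht) as Hm. set (m := dyadic_level t) in *.
  assert (Hsep : forall i j, (i < j)%nat -> 1/2 < 2 ^ i * t -> 2 ^ j * t <= 1 -> False).
  { intros i j Hij Hi Hj. assert (2 ^ S i <= 2 ^ j) by (apply Rle_pow; [lra | lia]).
    simpl in *. nra. }
  destruct (Nat.lt_trichotomy m n) as [Hlt | [Heq | Hgt]]; auto; exfalso.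
  - apply (Hsep m n); tauto.
  - apply (Hsep n m); tauto.
Qed.

Lemma dyadic_level_half t : 0 < t <= 1 -> dyadic_level (t / 2) = S (dyadic_level t).
Proof.
  intros Ht. apply dyadic_level_unique. pose proof (dyadic_level_spec t Ht). simpl.
  replace (2 * 2 ^ dyadic_level t * (t / 2)) with (2 ^ dyadic_level t * t) by field. lra.
Qed.

Lemma dyadic_level_antitone s t : 0 < s -> s < t <= 1 ->
  (dyadic_level t <= dyadic_level s)%nat.
Proof.
  intros Hs Hst. pose proof (dyadic_level_spec s ltac:(lra)) as Hls.
  pose proof (dyadic_level_spec t ltac:(lra)) as Hlt.
  destruct (Nat.le_gt_cases (dyadic_level t) (dyadic_level s)) as [Hle | Hgt]; [exact Hle |].
  assert (2 ^ S (dyadic_level s) <= 2 ^ dyadic_level t) by (apply Rle_pow; [lra | lia]).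
  pose proof (pow_lt 2 (dyadic_level s) ltac:(lra)). simpl in *. nra.
Qed.

Record descending_map (p q : R) (F : R -> R) : Prop := {
  dm_lt : p < q;
  dm_cont : cont_on (cc p q) F;
  dm_incr : increasing_on (cc p q) F;
  dm_fix : F p = p;
  dm_below : forall x, p < x <= q -> p < F x < x }.

Section DescendingMap.

Variables (p q : R) (F : R -> R).
Hypothesis HF : descending_map p q F.

Lemma descending_map_maps x : cc p q x -> cc p q (F x).
Proof.
  intros [Hpx Hxq]. destruct (Rle_lt_or_eq_dec _ _ Hpx) as [Hlt | <-].
  - pose proof (dm_below _ _ _ HF x (conj Hlt Hxq)). unfold cc; lra.
  - rewrite (dm_fix _ _ _ HF). pose proof (dm_lt _ _ _ HF). unfold cc; lra.
Qed.

Lemma iter_maps n x : cc p q x -> cc p q (Nat.iter n F x).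
Proof. intros Hx. apply Nat.iter_invariant; [apply descending_map_maps | exact Hx]. Qed.

Lemma iter_above n x : p < x <= q -> p < Nat.iter n F x <= q.
Proof.
  intros Hx. apply Nat.iter_invariant; [| exact Hx].
  intros y Hy. pose proof (dm_below _ _ _ HF y Hy). lra.
Qed.

Lemma iter_increasing n : increasing_on (cc p q) (Nat.iter n F).
Proof.
  induction n as [| n IH]; intros x y Hx Hy Hxy; auto.
  apply (dm_incr _ _ _ HF); [apply iter_maps .. | apply IH]; auto.
Qed.

Lemma iter_cont n : cont_on (cc p q) (Nat.iter n F).
Proof.
  induction n as [| n IH]; simpl.
  - intros x _ eps Heps. exists eps; split; auto.
  - apply (cont_on_comp _ (cc p q) (Nat.iter n F) F);
      [exact IH | apply (dm_cont _ _ _ HF) | apply iter_maps].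
Qed.

Lemma orbit_above n : p < Nat.iter n F q <= q.
Proof. apply iter_above. pose proof (dm_lt _ _ _ HF). lra. Qed.

Lemma orbit_antitone m n : (n <= m)%nat -> Nat.iter m F q <= Nat.iter n F q.
Proof.
  induction 1 as [| m _ IH]; [lra |]. rewrite Nat.iter_succ.
  pose proof (dm_below _ _ _ HF _ (orbit_above m)). lra.
Qed.

(* The orbit of [q] decreases to a limit which is a fixed point; [p] is the only one. *)
Lemma orbit_cv : Un_cv (fun n => Nat.iter n F q) p.
Proof.
  set (u n := Nat.iter n F q).
  destruct (decreasing_cv u) as [L HL].
  { intros n. apply orbit_antitone. lia. }
  { exists (- p). intros x [i ->]. unfold opp_seq, u. pose proof (orbit_above i). lra. }
  assert (HLpq : cc p q L).
  { split; apply Rnot_lt_le; intros HL'.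
    - destruct (HL (p - L)) as [N HN]; [lra |]. pose proof (HN N (le_n N)) as HN'.
      pose proof (orbit_above N). unfold R_dist, u in *.
      revert HN'; unfold Rabs; destruct Rcase_abs; lra.
    - destruct (HL (L - q)) as [N HN]; [lra |]. pose proof (HN N (le_n N)) as HN'.
      pose proof (orbit_above N). unfold R_dist, u in *.
      revert HN'; unfold Rabs; destruct Rcase_abs; lra. }
  assert (Hshift : Un_cv (fun n => u (S n)) L).
  { intros e He. destruct (HL e He) as [N HN]. exists N; intros n Hn. apply HN; lia. }
  assert (Himage : Un_cv (fun n => u (S n)) (F L)).
  { intros e He. destruct (dm_cont _ _ _ HF L HLpq e He) as [del [Hdel Hy]].
    destruct (HL del Hdel) as [N HN]. exists N; intros n Hn.
    change (Rabs (F (u n) - F L) < e). apply Hy; [| apply HN; auto].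
    pose proof (orbit_above n). unfold cc, u; lra. }
  pose proof (UL_sequence _ _ _ Hshift Himage) as HFL.
  destruct (Rle_lt_or_eq_dec _ _ (proj1 HLpq)) as [Hlt | <-]; [| exact HL].
  pose proof (dm_below _ _ _ HF L (conj Hlt (proj2 HLpq))). lra.
Qed.



Lemma orbit_bracket x : p < x <= q -> exists n, Nat.iter (S n) F q < x <= Nat.iter n F q.
Proof.
  intros Hx.
  assert (Hbelow : exists k, Nat.iter k F q < x).
  { destruct (orbit_cv (x - p)) as [k Hk]; [lra |]. exists k.
    specialize (Hk k (le_n k)). pose proof (orbit_above k). unfold R_dist in Hk.
    revert Hk; unfold Rabs; destruct Rcase_abs; lra. }
  destruct Hbelow as [k Hk]. induction k as [| k IH].
  - simpl in Hk. lra.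
  - destruct (Rlt_le_dec (Nat.iter k F q) x) as [Hlt | Hle]; auto. exists k; auto.
Qed.

(* The fundamental domain (F q, q] is parametrised affinely by (1/2, 1]. *)
Definition fundamental_param (s : R) : R := F q + (2 * s - 1) * (q - F q).

Lemma fundamental_param_range s : 1/2 < s <= 1 -> F q < fundamental_param s <= q.
Proof.
  intros Hs. pose proof (dm_below _ _ _ HF q ltac:(pose proof (dm_lt _ _ _ HF); lra)).
  unfold fundamental_param. split; nra.
Qed.

Lemma fundamental_param_lt s s' : s < s' -> fundamental_param s < fundamental_param s'.
Proof.
  intros Hss'. pose proof (dm_below _ _ _ HF q ltac:(pose proof (dm_lt _ _ _ HF); lra)).
  unfold fundamental_param. nra.
Qed.

Lemma fundamental_param_onto y : F q < y <= q ->
  exists s, 1/2 < s <= 1 /\ fundamental_param s = y.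
Proof.
  intros Hy. exists ((y - F q) / (q - F q) / 2 + 1/2).
  assert (0 < (y - F q) / (q - F q) <= 1).
  { split; [apply Rdiv_lt_0_compat; lra |].
    apply (Rmult_le_reg_r (q - F q)); [lra |]. field_simplify; lra. }
  split; [lra |]. unfold fundamental_param. field. lra.
Qed.

(* The block (2^-(n+1), 2^-n] of [0, 1] is sent onto F^n of the fundamental domain,
   which makes halving correspond to one application of [F]. *)
Definition chart (t : R) : R :=
  if Rle_dec t 0 then p
  else Nat.iter (dyadic_level t) F (fundamental_param (2 ^ dyadic_level t * t)).

Lemma chart_0 : chart 0 = p.
Proof. unfold chart. destruct Rle_dec; lra. Qed.

Lemma chart_pos t : 0 < t <= 1 ->
  chart t = Nat.iter (dyadic_level t) F (fundamental_param (2 ^ dyadic_level t * t)).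
Proof. intros Ht. unfold chart. destruct Rle_dec; [lra | reflexivity]. Qed.

Lemma chart_block t : 0 < t <= 1 ->
  Nat.iter (S (dyadic_level t)) F q < chart t <= Nat.iter (dyadic_level t) F q.
Proof.
  intros Ht. rewrite chart_pos by exact Ht.
  pose proof (fundamental_param_range _ (dyadic_level_spec t Ht)) as Hs.
  pose proof (dm_lt _ _ _ HF). set (n := dyadic_level t) in *.
  assert (HFq : cc p q (F q)) by (apply descending_map_maps; unfold cc; lra).
  split.
  - rewrite Nat.iter_succ_r. apply iter_increasing; unfold cc in *; lra.
  - apply (increasing_on_le (cc p q)); [apply iter_increasing | unfold cc in *; lra ..].
Qed.

Lemma chart_half t : cc 0 1 t -> chart (t / 2) = F (chart t).
Proof.
  intros [Ht0 Ht1]. destruct (Rle_lt_or_eq_dec _ _ Ht0) as [Hpos | <-].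
  - rewrite !chart_pos, dyadic_level_half by lra. rewrite Nat.iter_succ.
    replace (2 ^ S (dyadic_level t) * (t / 2)) with (2 ^ dyadic_level t * t)
      by (simpl; field). reflexivity.
  - replace (0 / 2) with 0 by field. rewrite chart_0. symmetry. apply (dm_fix _ _ _ HF).
Qed.

Lemma chart_increasing : increasing_on (cc 0 1) chart.
Proof.
  intros s t [Hs0 Hs1] [Ht0 Ht1] Hst.
  destruct (Rle_lt_or_eq_dec _ _ Hs0) as [Hspos | <-].
  2:{ rewrite chart_0. pose proof (chart_block t ltac:(lra)).
      pose proof (orbit_above (S (dyadic_level t))). lra. }
  pose proof (dyadic_level_antitone s t Hspos ltac:(lra)) as Hle.
  destruct (Nat.le_gt_cases (dyadic_level s) (dyadic_level t)) as [Hge | Hgt].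
  - assert (Hn : dyadic_level s = dyadic_level t) by lia.
    rewrite !chart_pos, Hn by lra.
    pose proof (dyadic_level_spec s ltac:(lra)) as Hls. rewrite Hn in Hls.
    pose proof (dyadic_level_spec t ltac:(lra)) as Hlt.
    pose proof (pow_lt 2 (dyadic_level t) ltac:(lra)).
    pose proof (fundamental_param_range _ Hls). pose proof (fundamental_param_range _ Hlt).
    pose proof (orbit_above 1) as HFq. simpl in HFq.
    apply iter_increasing; [unfold cc; lra .. |].
    apply fundamental_param_lt. nra.
  - pose proof (chart_block s ltac:(lra)). pose proof (chart_block t ltac:(lra)).
    pose proof (orbit_antitone (dyadic_level s) (S (dyadic_level t)) Hgt). lra.
Qed.

Lemma chart_onto x : cc p q x -> exists t, cc 0 1 t /\ chart t = x.
Proof.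
  intros [Hx0 Hx1]. destruct (Rle_lt_or_eq_dec _ _ Hx0) as [Hpx | <-].
  2:{ exists 0. split; [unfold cc; lra | apply chart_0]. }
  destruct (orbit_bracket x ltac:(lra)) as [n [Hxn Hxn']].
  pose proof (orbit_above 1) as HFq. simpl in HFq.
  assert (Hivt : exists y, cc (F q) q y /\ Nat.iter n F y = x).
  { apply cont_on_ivt; [lra | |].
    - apply (cont_on_subset (cc p q)); [apply iter_cont |]. unfold cc; intros; lra.
    - rewrite Nat.iter_succ_r in Hxn. nra. }
  destruct Hivt as [y [[Hy0 Hy1] Hyx]].
  destruct (Rle_lt_or_eq_dec _ _ Hy0) as [Hy | Hy].
  2:{ rewrite <- Hy in Hyx. rewrite Nat.iter_succ_r in Hxn. lra. }
  destruct (fundamental_param_onto y (conj Hy Hy1)) as [s [Hs Hsy]].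
  pose proof (pow_lt 2 n ltac:(lra)).
  assert (1 <= 2 ^ n) by (rewrite <- (pow1 n); apply pow_incr; lra).
  assert (Hts : 2 ^ n * (s / 2 ^ n) = s) by (field; lra).
  assert (Ht : 0 < s / 2 ^ n <= 1).
  { split; [apply Rdiv_lt_0_compat; lra |]. nra. }
  exists (s / 2 ^ n). split; [unfold cc; lra |].
  rewrite chart_pos, (dyadic_level_unique _ n), Hts, Hsy by (auto; lra). exact Hyx.
Qed.

Lemma chart_bijection : increasing_bijection 0 1 p q chart.
Proof.
  pose proof (dm_lt _ _ _ HF). split; [exact chart_increasing | | exact chart_onto].
  intros t [Ht0 Ht1]. destruct (Rle_lt_or_eq_dec _ _ Ht0) as [Hpos | <-].
  - pose proof (chart_block t ltac:(lra)).
    pose proof (orbit_above (S (dyadic_level t))).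
    pose proof (orbit_above (dyadic_level t)). unfold cc; lra.
  - rewrite chart_0. unfold cc; lra.
Qed.

End DescendingMap.

(* Both maps are conjugate to halving on [0, 1]. *)
Lemma descending_maps_conjugate p q F p' q' F' :
  descending_map p q F -> descending_map p' q' F' -> exists k,
  increasing_bijection p q p' q' k /\ forall x, cc p q x -> k (F x) = F' (k x).
Proof.
  intros HF HF'.
  pose proof (chart_bijection p q F HF) as HU. pose proof HU as [HUi HUm HUs].
  set (V := inv_on (cc 0 1) (chart p q F)).
  assert (HV : forall x, cc p q x -> cc 0 1 (V x) /\ chart p q F (V x) = x)
    by (intros x Hx; apply inv_on_spec, HUs, Hx).
  assert (HVU : forall t, cc 0 1 t -> V (chart p q F t) = t).
  { intros t Ht. destruct (HV _ (HUm t Ht)).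
    apply (increasing_on_inj _ _ _ _ HUi); auto. }
  exists (fun x => chart p' q' F' (V x)). split.
  - apply (increasing_bijection_comp _ _ 0 1); [| apply chart_bijection; exact HF'].
    exact (increasing_bijection_inv _ _ _ _ _ _ HU HV).
  - intros x Hx. destruct (HV x Hx) as [Ht Hx'].
    assert (Ht2 : cc 0 1 (V x / 2)) by (unfold cc in *; lra).
    assert (HFx : F x = chart p q F (V x / 2)) by (rewrite chart_half, Hx'; auto).
    rewrite HFx, HVU, (chart_half p' q' F' HF') by assumption. reflexivity.
Qed.

Section Flip.

Variables (b xL xR : R) (g : R -> R).
Hypotheses (Hdecr : decreasing_on (cc (g b) b) g) (Hcont : cont_on (cc (g b) b) g)
  (Hmaps : forall x, cc (g b) b x -> cc (g b) b (g x))
  (HxL : cc (g b) b xL) (HxR : cc (g b) b xR) (HgL : g xL = xR) (HgR : g xR = xL)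
  (HxRb : xR < b) (Hg2 : forall x, xR < x <= b -> g (g x) < x).

Lemma flip_bijection : decreasing_bijection xR b (g b) xL g.
Proof.
  assert (Hsub : forall x, cc xR b x -> cc (g b) b x) by (unfold cc in *; intros; lra).
  split.
  - intros x y Hx Hy. apply Hdecr; auto.
  - intros x Hx. rewrite <- HgR. split; apply (decreasing_on_le _ _ _ _ Hdecr);
      unfold cc in *; try lra.
  - intros y Hy. apply cont_on_ivt; [lra | apply (cont_on_subset _ _ _ Hcont Hsub) |].
    rewrite HgR. unfold cc in Hy. nra.
Qed.

Lemma flip_maps_back x : cc (g b) xL x -> cc xR b (g x).
Proof.
  intros Hx. assert (Hb : cc (g b) b (g b)) by (unfold cc in *; lra).
  split.
  - rewrite <- HgL. apply (decreasing_on_le _ _ _ _ Hdecr); unfold cc in *; lra.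
  - assert (Hx' : cc (g b) b x) by (unfold cc in *; lra).
    pose proof (decreasing_on_le _ _ _ _ Hdecr Hb Hx' (proj1 Hx)).
    pose proof (Hg2 b ltac:(lra)). lra.
Qed.

Lemma square_descending : descending_map xR b (fun x => g (g x)).
Proof.
  assert (Hsub : forall x, cc xR b x -> cc (g b) b x) by (unfold cc in *; intros; lra).
  split; auto.
  - apply (cont_on_comp _ (cc (g b) b)); [apply (cont_on_subset _ _ _ Hcont Hsub) | auto |].
    intros x Hx. apply Hmaps, Hsub, Hx.
  - intros x y Hx Hy Hxy. apply Hdecr; try apply Hmaps; auto.
  - congruence.
  - intros x Hx. split; auto.
    rewrite <- HgL. apply Hdecr; [apply Hmaps, Hsub; unfold cc; lra | auto |].
    rewrite <- HgR. apply Hdecr; [exact HxR | apply Hsub; unfold cc; lra | lra].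
Qed.

End Flip.

(* [h] is [k] on the right piece and is forced by the conjugacy on the left piece. *)
Definition glue (f g k : R -> R) (xbR a : R) (x : R) : R :=
  if Rle_dec xbR x then k x else g (k (inv_on (cc xbR a) f x)).

Section Glue.

Variables (a b xL xR xbL xbR : R) (f g k : R -> R).
Hypotheses (Hsep : xbL < xbR)
  (Hf : decreasing_bijection xbR a (f a) xbL f)
  (Hf_back : forall x, cc (f a) xbL x -> cc xbR a (f x))
  (Hg : decreasing_bijection xR b (g b) xL g)
  (Hk : increasing_bijection xbR a xR b k)
  (Hconj : forall x, cc xbR a x -> k (f (f x)) = g (g (k x))).

Let h := glue f g k xbR a.
Let fi := inv_on (cc xbR a) f.

Lemma glue_right x : cc xbR a x -> h x = k x.
Proof. intros Hx. unfold h, glue. destruct Rle_dec; [reflexivity | unfold cc in *; lra]. Qed.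

Lemma glue_left x : cc (f a) xbL x -> h x = g (k (fi x)).
Proof. intros Hx. unfold h, glue. destruct Rle_dec; [unfold cc in *; lra | reflexivity]. Qed.

Lemma inv_f_spec y : cc (f a) xbL y -> cc xbR a (fi y) /\ f (fi y) = y.
Proof. intros Hy. apply inv_on_spec, (db_onto _ _ _ _ _ Hf), Hy. Qed.

Lemma inv_f_cancel x : cc xbR a x -> fi (f x) = x.
Proof.
  intros Hx. destruct (inv_f_spec (f x) (db_maps _ _ _ _ _ Hf x Hx)).
  apply (decreasing_on_inj _ _ _ _ (db_decr _ _ _ _ _ Hf)); auto.
Qed.

Lemma glue_right_bijection : increasing_bijection xbR a xR b h.
Proof.
  destruct Hk as [Hki Hkm Hks]. split.
  - intros x y Hx Hy Hxy. rewrite !glue_right; auto.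
  - intros x Hx. rewrite glue_right; auto.
  - intros y Hy. destruct (Hks y Hy) as [x [Hx <-]]. exists x. rewrite glue_right; auto.
Qed.

Lemma glue_left_bijection : increasing_bijection (f a) xbL (g b) xL h.
Proof.
  destruct Hk as [Hki Hkm Hks], Hg as [Hgd Hgm Hgs], Hf as [Hfd Hfm Hfs]. split.
  - intros x y Hx Hy Hxy. rewrite !glue_left by auto.
    destruct (inv_f_spec x Hx) as [Hx' Ex], (inv_f_spec y Hy) as [Hy' Ey].
    assert (Hfi : fi y < fi x).
    { apply Rnot_le_lt. intros Hle.
      pose proof (decreasing_on_le _ _ _ _ Hfd Hx' Hy' Hle). lra. }
    apply Hgd; auto.
  - intros x Hx. rewrite glue_left by auto. apply Hgm, Hkm, inv_f_spec, Hx.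
  - intros y Hy. destruct (Hgs y Hy) as [z [Hz <-]]. destruct (Hks z Hz) as [x [Hx <-]].
    exists (f x). split; [auto |]. rewrite glue_left, inv_f_cancel by auto. reflexivity.
Qed.

Lemma glue_conj x : unionS (cc (f a) xbL) (cc xbR a) x -> g (h x) = h (f x).
Proof.
  intros [Hx | Hx].
  - destruct (inv_f_spec x Hx) as [Hx' Ex].
    rewrite glue_left, (glue_right (f x)), <- Hconj by auto. rewrite Ex. reflexivity.
  - pose proof (db_maps _ _ _ _ _ Hf x Hx).
    rewrite glue_right, glue_left, inv_f_cancel by auto. reflexivity.
Qed.

End Glue.

Theorem theorem5 (a b : R) (g f : R -> R) (xL xR xbL xbR : R)
  (ha : 0 < a) (hb : 0 < b)
  (hI : g b <= b) (hJ : f a <= a)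
  (hg : decr_homeo_self (cc (g b) b) g)
  (hf : decr_homeo_self (cc (f a) a) f)
  (hg0 : repelling_fp (cc (g b) b) g 0)
  (hxL : xL < 0) (hxR : 0 < xR)
  (hg2 : attracting_2orbit (cc (g b) b) g xL xR)
  (hgL : g xL = xR) (hgR : g xR = xL) (hbxR : b > xR)
  (hf0 : repelling_fp (cc (f a) a) f 0)
  (hxbL : xbL < 0) (hxbR : 0 < xbR)
  (hf2 : attracting_2orbit (cc (f a) a) f xbL xbR)
  (hfL : f xbL = xbR) (hfR : f xbR = xbL) (haxR : a > xbR)
  (h3 : forall x, xR < x <= b -> g (g x) < x)
  (h4 : forall x, xbR < x <= a -> f (f x) < x) :
  exists h : R -> R,
    homeo_onto (unionS (cc (f a) xbL) (cc xbR a))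
               (unionS (cc (g b) xL) (cc xR b)) h /\
    (forall x, unionS (cc (f a) xbL) (cc xbR a) x -> g (h x) = h (f x)).
Proof.
  destruct hg as [gd [[_ [_ [_ [gc _]]]] gm]].
  destruct hf as [fd [[_ [_ [_ [fc _]]]] fm]].
  destruct hg2 as [_ [_ [_ [[HxL _] [HxR _]]]]].
  destruct hf2 as [_ [_ [_ [[HxbL _] [HxbR _]]]]].
  pose proof (flip_bijection b xL xR g gd gc HxL HxR hgR hbxR) as Hg.
  pose proof (flip_bijection a xbL xbR f fd fc HxbL HxbR hfR haxR) as Hf.
  pose proof (flip_maps_back a xbL xbR f fd HxbL hfL haxR h4) as Hf_back.
  destruct (descending_maps_conjugate _ _ _ _ _ _
              (square_descending a xbL xbR f fd fc fm HxbL HxbR hfL hfR haxR h4)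
              (square_descending b xL xR g gd gc gm HxL HxR hgL hgR hbxR h3))
    as [k [Hk Hconj]].
  exists (glue f g k xbR a). split.
  - apply homeo_onto_union; [lra | lra | | apply glue_right_bijection, Hk].
    apply (glue_left_bijection a b xL xR); auto. lra.
  - apply glue_conj; auto. lra.
Qed.
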